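(* Let $\mathsf H_\downarrow$ be any conditional entropy of the form below, and let $|\psi\rangle_{AEFZ}=\sum_{z\in\mathbb Z_d}\sqrt{P_Z(z)}|z\rangle_A|z\rangle_Z|\sigma_z\rangle_{EF}$ be a normalized pure state with $P_Z$ a probability distribution and $|\sigma_z\rangle_{EF}$ arbitrary unit vectors. Then $\mathsf H_\downarrow(A|E)_\psi+\mathsf H^\perp_\downarrow(X_A|FZ)_\psi\le\log|A|$.
   Context: $\mathcal H_A\cong\mathbb C^d$ with standard basis $\{|z\rangle\}$ and conjugate basis $|\tilde x\rangle=d^{-1/2}\sum_z\omega^{xz}|z\rangle$, $\omega=e^{2\pi i/d}$. A divergence $\mathsf D$ satisfies data processing under quantum channels, $\mathsf D(\rho,c\sigma)=\mathsf D(\rho,\sigma)-\log c$, dominance ($\sigma'\ge\sigma\Rightarrow\mathsf D(\rho,\sigma')\le\mathsf D(\rho,\sigma)$), and $\mathsf D(\rho,\rho)=0$; $\mathsf H_\downarrow(A|B)_\rho=-\mathsf D(\rho_{AB},\mathbb I_A\otimes\rho_B)$; dual $\mathsf H^\perp_\downarrow(A|B)_\rho=-\mathsf H_\downarrow(A|C)_\rho$ for a purification $\rho_{ABC}$. $\mathsf H(A|E)_\psi$ refers to the quantum system $A$ of $\psi_{AE}$; $\mathsf H^\perp(X_A|FZ)_\psi$ is the dual entropy of the CQ state obtained by measuring $A$ in the conjugate basis, $\sum_x|x\rangle\langle x|\otimes\mathrm{Tr}_A[(|\tilde x\rangle\langle\tilde x|_A\otimes\mathbb I)\psi_{AFZ}]$.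 *)

From mathcomp Require Import all_boot.
From Stdlib Require Import Reals.

Set Implicit Arguments.
Unset Strict Implicit.
Unset Printing Implicit Defensive.

Definition cplx : Type := (R * R)%type.
Definition C0 : cplx := (0%R, 0%R).
Definition C1 : cplx := (1%R, 0%R).
Definition RC (r : R) : cplx := (r, 0%R).
Definition Cadd (x y : cplx) : cplx := ((x.1 + y.1)%R, (x.2 + y.2)%R).
Definition Cmul (x y : cplx) : cplx :=
  ((x.1 * y.1 - x.2 * y.2)%R, (x.1 * y.2 + x.2 * y.1)%R).
Definition Cconj (x : cplx) : cplx := (x.1, (- x.2)%R).
Definition Cnorm2 (x : cplx) : R := (x.1 * x.1 + x.2 * x.2)%R.
Definition Cexpi (t : R) : cplx := (cos t, sin t).

(* Op T U = matrices with
   rows indexed by T and columns by U (linear maps cplx^U -> cplx^T). *)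
Definition Op (T U : finType) : Type := T -> U -> cplx.

Definition mul (T U V : finType) (A : Op T U) (B : Op U V) : Op T V :=
  fun i k => \big[Cadd/C0]_(j : U) Cmul (A i j) (B j k).
Definition adj (T U : finType) (A : Op T U) : Op U T :=
  fun j i => Cconj (A i j).
Definition idop (T : finType) : Op T T :=
  fun i j => if i == j then C1 else C0.
Definition trace (T : finType) (A : Op T T) : cplx := \big[Cadd/C0]_(i : T) A i i.
Definition scale (T U : finType) (c : R) (A : Op T U) : Op T U :=
  fun i j => Cmul (RC c) (A i j).
Definition subop (T U : finType) (A B : Op T U) : Op T U :=
  fun i j => Cadd (A i j) (Cmul (RC (-1)%R) (B i j)).

Definition quad (T : finType) (A : Op T T) (v : T -> cplx) : cplx :=
  \big[Cadd/C0]_(i : T) \big[Cadd/C0]_(j : T) Cmul (Cmul (Cconj (v i)) (A i j)) (v j).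
Definition psd (T : finType) (A : Op T T) : Prop :=
  forall v : T -> cplx, (quad A v).2 = 0%R /\ (0 <= (quad A v).1)%R.
Definition density (T : finType) (rho : Op T T) : Prop :=
  psd rho /\ trace rho = C1.
Definition loewner_le (T : finType) (sigma sigma' : Op T T) : Prop :=
  psd (subop sigma' sigma).

(* quantum channels T -> U in Kraus form (every CPTP map has one) *)
Definition is_kraus (T U K : finType) (Kr : K -> Op U T) : Prop :=
  (fun i j => \big[Cadd/C0]_(k : K) mul (adj (Kr k)) (Kr k) i j) = @idop T.
Definition channel (T U K : finType) (Kr : K -> Op U T) (rho : Op T T) : Op U U :=
  fun i j => \big[Cadd/C0]_(k : K) mul (mul (Kr k) rho) (adj (Kr k)) i j.

Definition kron (T U : finType) (M : Op T T) (N : Op U U) : Op (prod T U) (prod T U) :=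
  fun p q => Cmul (M p.1 q.1) (N p.2 q.2).
Definition ptrace1 (T U : finType) (M : Op (prod T U) (prod T U)) : Op U U :=
  fun u u' => \big[Cadd/C0]_(t : T) M (t, u) (t, u').
Definition ptrace2 (T U : finType) (M : Op (prod T U) (prod T U)) : Op T T :=
  fun t t' => \big[Cadd/C0]_(u : U) M (t, u) (t', u).
Definition proj (T : finType) (v : T -> cplx) : Op T T :=
  fun i j => Cmul (v i) (Cconj (v j)).

(* ---------- extended reals R u {+oo}; None = +oo ---------- *)
Definition Rbar : Type := option R.
Definition Rbar_le (x y : Rbar) : Prop :=
  match x, y with
  | _, None => True
  | None, Some _ => False
  | Some a, Some b => (a <= b)%R
  end.
Definition Rbar_shift (x : Rbar) (r : R) : Rbar := option_map (fun a => (a + r)%R) x.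

Definition divergence_family : Type :=
  forall T : finType, Op T T -> Op T T -> Rbar.

Definition is_divergence (D : divergence_family) : Prop :=
  (forall (T U K : finType) (Kr : K -> Op U T), is_kraus Kr ->
     forall rho sigma : Op T T, density rho -> psd sigma ->
       Rbar_le (D U (channel Kr rho) (channel Kr sigma)) (D T rho sigma))
  /\
  (forall (T : finType) (rho sigma : Op T T) (c : R), density rho -> psd sigma ->
     (0 < c)%R -> D T rho (scale c sigma) = Rbar_shift (D T rho sigma) (- ln c)%R)
  /\
  (forall (T : finType) (rho sigma sigma' : Op T T), density rho -> psd sigma ->
     loewner_le sigma sigma' -> Rbar_le (D T rho sigma') (D T rho sigma))
  /\
  (forall (T : finType) (rho : Op T T), density rho -> D T rho rho = Some 0%R).

(* minus the conditional entropy: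
   Dcond D rho_AB = D(rho_AB, I_A (x) rho_B) = - H_down(A|B)_rho *)
Definition Dcond (D : divergence_family) (A B : finType)
  (rho : Op (prod A B) (prod A B)) : Rbar :=
  D (prod A B) rho (kron (@idop A) (ptrace1 rho)).

(* |psi>_{AEFZ} = sum_z sqrt(P z) |z>_A |z>_Z |sigma_z>_{EF},
   systems ordered as ((A, E), (F, Z)) with A = Z = 'I_d *)
Definition psi_vec (d : nat) (E F : finType) (P : 'I_d -> R)
  (sig : 'I_d -> prod E F -> cplx) : prod (prod 'I_d E) (prod F 'I_d) -> cplx :=
  fun p => let: ((a, e), (f, z)) := p in
           if a == z then Cmul (RC (sqrt (P z))) (sig z (e, f)) else C0.

Definition rho_AFZ (d : nat) (E F : finType) (rho : Op (prod (prod 'I_d E) (prod F 'I_d))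
     (prod (prod 'I_d E) (prod F 'I_d))) : Op (prod 'I_d (prod F 'I_d)) (prod 'I_d (prod F 'I_d)) :=
  fun p q => \big[Cadd/C0]_(e : E) rho ((p.1, e), p.2) ((q.1, e), q.2).

Definition conj_basis (d : nat) (x : 'I_d) : 'I_d -> cplx :=
  fun z => Cmul (RC (/ sqrt (INR d))) (Cexpi (2 * PI * INR x * INR z / INR d)%R).

(* CQ state  sum_x |x><x| (x) Tr_A[(|x~><x~|_A (x) I) psi_{AFZ}] on X (FZ) *)
Definition cq_state (d : nat) (G : finType) (M : Op (prod 'I_d G) (prod 'I_d G)) :
  Op (prod 'I_d G) (prod 'I_d G) :=
  fun p q => if p.1 == q.1 then
    \big[Cadd/C0]_(a : 'I_d) \big[Cadd/C0]_(a' : 'I_d)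
      Cmul (Cmul (Cconj (conj_basis p.1 a)) (M (a, p.2) (a', q.2))) (conj_basis p.1 a')
  else C0.

Definition marg_XC (X G Cs : finType) (M : Op (prod (prod X G) Cs) (prod (prod X G) Cs)) :
  Op (prod X Cs) (prod X Cs) :=
  fun p q => \big[Cadd/C0]_(g : G) M ((p.1, g), p.2) ((q.1, g), q.2).

From Pilot Require Import Defs.
From Stdlib Require Import Reals Lra Psatz FunctionalExtensionality.
From mathcomp Require Import all_boot all_order all_algebra.
From mathcomp Require Import Rstruct complex.
Set Implicit Arguments. Unset Strict Implicit. Unset Printing Implicit Defensive.
Import Order.TTheory GRing.Theory Num.Theory.
Import Defs.
Local Open Scope complex_scope.
Local Open Scope ring_scope.

(* Measuring [A] of [psi] in the conjugate basis and keeping the outcome [x] gives the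
   CQ state on [X F Z].  Its natural purification, with purifying system [X E], and
   [phi] purify the same state, so by Uhlmann's theorem a partial isometry [Y] maps the
   former onto the latter.  Completing [Y] to a channel and composing it with the
   measurement yields a channel [L] from [A E] to [X C] with [L(psi_AE) = phi_XC] and
   [L(I_A (x) psi_E) <= d (I_X (x) phi_C)], the factor [d] coming from
   [|<x~|z>|^2 = 1/d].  Data processing, dominance and the scaling rule then give
   [D(phi_XC, I_X (x) phi_C) - log d <= D(psi_AE, I_A (x) psi_E)]. *)

Section RealPhases.
Local Open Scope R_scope.

Definition dft_phase (d u v : nat) : R := 2 * PI * (INR u - INR v) / INR d.

Lemma INR_dim_gt0 d (x : 'I_d) : 0 < INR d.
Proof. by apply: (lt_INR 0); apply/ssrnat.ltP; apply: leq_ltn_trans (ltn_ord x). Qed.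

Lemma sin_dft_phase_neq0 d (u v : 'I_d) : u != v -> sin (dft_phase d u v / 2) <> 0.
Proof.
move=> uv; have d0 := INR_dim_gt0 u.
have lt_u := lt_INR _ _ (ssrnat.ltP (ltn_ord u)).
have lt_v := lt_INR _ _ (ssrnat.ltP (ltn_ord v)).
have u0 := pos_INR u; have v0 := pos_INR v.
have neq_uv : INR u <> INR v by move=> /INR_eq /val_inj /eqP; rewrite (negbTE uv).
have -> : dft_phase d u v / 2 = PI * ((INR u - INR v) / INR d).
  by rewrite /dft_phase; field; lra.
set q := (INR u - INR v) / INR d.
have qd : q * INR d = INR u - INR v by rewrite /q; field; lra.
have PI0 := PI_RGT_0.
case: (Rtotal_order q 0) => [q_lt0|[q0|q_gt0]].
- have : 0 < sin (PI * - q) by apply: sin_gt_0; nra.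
  rewrite Ropp_mult_distr_r_reverse sin_neg; lra.
- by rewrite q0 Rmult_0_l in qd; lra.
- have : 0 < sin (PI * q) by apply: sin_gt_0; nra.
  lra.
Qed.

Lemma sin_half_eq0 t : cos t = 1 -> sin (t / 2) = 0.
Proof.
move=> cos1; have := cos_2a_sin (t / 2).
rewrite (_ : 2 * (t / 2) = t); last by field.
rewrite cos1 => sin2; have : sin (t / 2) * sin (t / 2) = 0 by lra.
by case/Rmult_integral.
Qed.

(* Stated in the [0 + _] shape expected by [cos_period] and [sin_period]. *)
Lemma dft_phase_period d (u v : nat) : 0 < INR d ->
  INR d * dft_phase d u v = 0 + 2 * INR u * PI - (0 + 2 * INR v * PI).
Proof. by move=> d0; rewrite /dft_phase; field; lra. Qed.

Lemma cos_sin_dft_period d (u v : nat) : 0 < INR d ->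
  cos (INR d * dft_phase d u v) = 1 /\ sin (INR d * dft_phase d u v) = 0.
Proof.
move=> d0; rewrite dft_phase_period // cos_minus sin_minus.
by rewrite !cos_period !sin_period cos_0 sin_0; split; ring.
Qed.

Lemma dft_phaseE d (x a a' : nat) : 0 < INR d ->
  2 * PI * INR x * INR a / INR d + - (2 * PI * INR x * INR a' / INR d)
  = INR x * dft_phase d a a'.
Proof. by move=> d0; rewrite /dft_phase; field; lra. Qed.

Lemma dft_phaseE' d (x x' a : nat) : 0 < INR d ->
  - (2 * PI * INR x * INR a / INR d) + 2 * PI * INR x' * INR a / INR d
  = INR a * dft_phase d x' x.
Proof. by move=> d0; rewrite /dft_phase; field; lra. Qed.

Lemma dft_norm d : 0 < INR d -> / sqrt (INR d) * / sqrt (INR d) * INR d = 1.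
Proof. by move=> d0; rewrite -Rinv_mult sqrt_sqrt; [field|]; lra. Qed.

End RealPhases.

(* Imported only now: its [field] tactic shadows the Stdlib one used above on [R]. *)
From mathcomp Require Import ring.

Notation CC := (complex R).

Definition toC (x : cplx) : CC := x.1 +i* x.2.
Definition ofC (z : CC) : cplx := let: a +i* b := z in (a, b).

Lemma toCK z : toC (ofC z) = z. Proof. by case: z. Qed.
Lemma toC_inj : injective toC.
Proof. by move=> [a b] [c d] [-> ->]. Qed.
Lemma toC_add x y : toC (Cadd x y) = toC x + toC y.
Proof. by case: x => a b; case: y. Qed.
Lemma toC_mul x y : toC (Cmul x y) = toC x * toC y.
Proof. by case: x => a b; case: y. Qed.
Lemma toC_conj x : toC (Cconj x) = (toC x)^*.
Proof. by case: x. Qed.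
Lemma toC_RC r : toC (RC r) = r%:C. Proof. by []. Qed.
Lemma toC_C0 : toC Defs.C0 = 0. Proof. by []. Qed.
Lemma toC_C1 : toC Defs.C1 = 1. Proof. by []. Qed.
Lemma toC_sum (I : finType) (F : I -> cplx) :
  toC (\big[Cadd/C0]_(i : I) F i) = \sum_(i : I) toC (F i).
Proof. exact: (big_morph toC toC_add toC_C0). Qed.

Lemma conj_realC (r : R) : (r%:C : CC)^* = r%:C.
Proof. by apply/eqP; rewrite eq_complex /= oppr0 !eqxx. Qed.
Lemma mul_realC (r s : R) : (r%:C : CC) * s%:C = (Rmult r s)%:C.
Proof. by apply/eqP; rewrite eq_complex /= !mulr0 !mul0r subr0 addr0 !eqxx. Qed.
Lemma conj_nat n : ((n%:R : CC))^* = n%:R.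
Proof. exact: rmorph_nat. Qed.
Lemma natb_sqr (b : bool) : (b%:R : CC) = b%:R * b%:R.
Proof. by case: b; rewrite ?mulr1 ?mulr0. Qed.

Definition sqnorm (u : CC) : R := let: a +i* b := u in (a * a + b * b)%R.
Lemma sqnorm_ge0 u : 0 <= sqnorm u.
Proof. by case: u => a b; rewrite /sqnorm -!expr2 addr_ge0 // sqr_ge0. Qed.
Lemma sqnorm_eq0 u : sqnorm u = 0 -> u = 0.
Proof.
case: u => a b; rewrite /sqnorm => /eqP; rewrite -!expr2 paddr_eq0 ?sqr_ge0 // !sqrf_eq0.
by case/andP => /eqP -> /eqP ->.
Qed.
Lemma mulC_conj u : u * u^* = (sqnorm u) +i* 0.
Proof.
case: u => a b; apply/eqP; rewrite eq_complex /=; apply/andP; split; apply/eqP.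
  by rewrite mulrN opprK.
by rewrite mulrN mulrC addNr.
Qed.
Lemma sum_realC (K : finType) (f : K -> R) :
  \sum_k (f k +i* 0 : CC) = (\sum_k f k) +i* 0.
Proof.
symmetry; apply: (big_morph (fun r : R => (r +i* 0 : CC))) => //.
by move=> x y; apply/eqP; rewrite eq_complex /= addr0 !eqxx.
Qed.

Lemma sum_delta (T : finType) (x : T) (F : T -> CC) : \sum_y (x == y)%:R * F y = F x.
Proof.
rewrite (bigD1 x) //= eqxx mul1r big1 ?addr0 // => y /negbTE.
by rewrite eq_sym => ->; rewrite mul0r.
Qed.
Lemma sum_option (T : finType) (F : option T -> CC) :
  \sum_(k : option T) F k = F None + \sum_(t : T) F (Some t).
Proof.
rewrite (bigD1 None) //=; congr (_ + _).
rewrite (reindex_omap Some (fun x => x)) /=; last by case.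
by apply: eq_bigl => t; rewrite eqxx.
Qed.
Lemma sum_pair (T U : finType) (F : (T * U)%type -> CC) :
  \sum_(p : T * U) F p = \sum_(i : T) \sum_(j : U) F (i, j).
Proof. by rewrite pair_big /=; apply: eq_bigr => -[]. Qed.

Definition entry (T U : finType) (M : Op T U) : T -> U -> CC := fun i j => toC (M i j).

Lemma entry_ext (T U : finType) (A B : Op T U) :
  (forall i j, entry A i j = entry B i j) -> A = B.
Proof.
move=> AB; apply: functional_extensionality => i; apply: functional_extensionality => j.
exact: toC_inj (AB i j).
Qed.

Lemma entry_mul (T U V : finType) (A : Op T U) (B : Op U V) i k :
  entry (mul A B) i k = \sum_j entry A i j * entry B j k.
Proof. by rewrite /entry /mul toC_sum; apply: eq_bigr => j _; rewrite toC_mul. Qed.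
Lemma entry_adj (T U : finType) (A : Op T U) j i : entry (adj A) j i = (entry A i j)^*.
Proof. by rewrite /entry /adj toC_conj. Qed.
Lemma entry_idop (T : finType) (i j : T) : entry (@idop T) i j = (i == j)%:R.
Proof. by rewrite /entry /idop; case: eqP. Qed.
Lemma entry_scale (T U : finType) c (A : Op T U) i j :
  entry (scale c A) i j = c%:C * entry A i j.
Proof. by rewrite /entry /scale toC_mul. Qed.
Lemma entry_subop (T U : finType) (A B : Op T U) i j :
  entry (subop A B) i j = entry A i j - entry B i j.
Proof.
rewrite /entry /subop toC_add toC_mul toC_RC.
have -> : (((-1)%R : R)%:C : CC) = - 1 by apply/eqP; rewrite eq_complex /= oppr0 !eqxx.
by rewrite mulN1r.
Qed.
Lemma toC_trace (T : finType) (A : Op T T) : toC (trace A) = \sum_i entry A i i.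
Proof. by rewrite /trace toC_sum. Qed.
Lemma entry_kron (T U : finType) (M : Op T T) (N : Op U U) p q :
  entry (kron M N) p q = entry M p.1 q.1 * entry N p.2 q.2.
Proof. by rewrite /entry /kron toC_mul. Qed.
Lemma entry_ptrace1 (T U : finType) (M : Op (T * U)%type (T * U)%type) u u' :
  entry (ptrace1 M) u u' = \sum_t entry M (t, u) (t, u').
Proof. by rewrite /entry /ptrace1 toC_sum. Qed.
Lemma entry_ptrace2 (T U : finType) (M : Op (T * U)%type (T * U)%type) t t' :
  entry (ptrace2 M) t t' = \sum_u entry M (t, u) (t', u).
Proof. by rewrite /entry /ptrace2 toC_sum. Qed.
Lemma entry_proj (T : finType) (v : T -> cplx) i j :
  entry (proj v) i j = toC (v i) * (toC (v j))^*.
Proof. by rewrite /entry /proj toC_mul toC_conj. Qed.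
Lemma entry_channel (T U K : finType) (Kr : K -> Op U T) (rho : Op T T) i j :
  entry (channel Kr rho) i j =
  \sum_k \sum_t \sum_t' entry (Kr k) i t * entry rho t t' * (entry (Kr k) j t')^*.
Proof.
rewrite /entry /channel toC_sum; apply: eq_bigr => k _.
rewrite -/(entry _ _ _) entry_mul.
under eq_bigr => t' _ do rewrite entry_mul entry_adj big_distrl /=.
by rewrite exchange_big.
Qed.
Lemma toC_quad (T : finType) (A : Op T T) v :
  toC (quad A v) = \sum_i \sum_j (toC (v i))^* * entry A i j * toC (v j).
Proof.
rewrite /quad toC_sum; apply: eq_bigr => i _; rewrite toC_sum; apply: eq_bigr => j _.
by rewrite !toC_mul toC_conj.
Qed.

Definition gram (T : finType) (M : Op T T) :=
  exists (K : finType) (W : T -> K -> CC),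
    forall i j, entry M i j = \sum_k W i k * (W j k)^*.

Lemma gram_psd (T : finType) (M : Op T T) : gram M -> psd M.
Proof.
case=> K [W MW] v.
pose w k := \sum_i (toC (v i))^* * W i k.
have quadE : toC (quad M v) = (\sum_k sqnorm (w k)) +i* 0.
  rewrite -sum_realC -(eq_bigr _ (fun k _ => mulC_conj (w k))) toC_quad.
  under [RHS]eq_bigr => k _ do rewrite rmorph_sum big_distrl /=.
  rewrite [RHS]exchange_big /=; apply: eq_bigr => i _.
  under eq_bigr => j _ do rewrite MW big_distrr big_distrl /=.
  rewrite exchange_big /=; apply: eq_bigr => k _.
  rewrite big_distrr /=; apply: eq_bigr => j _.
  by rewrite rmorphM /= conjCK -!mulrA [_ * toC (v j)]mulrC.
case: (quad M v) quadE => q1 q2 /= [-> ->]; split=> //.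
by apply/RleP; apply: sumr_ge0 => k _; exact: sqnorm_ge0.
Qed.

Lemma entry_channel_gram (T U K M : finType) (Kr : K -> Op U T) (rho : Op T T)
    (W : T -> M -> CC) :
  (forall t t', entry rho t t' = \sum_m W t m * (W t' m)^*) ->
  forall i j, entry (channel Kr rho) i j =
    \sum_k \sum_m (\sum_t entry (Kr k) i t * W t m) * (\sum_t entry (Kr k) j t * W t m)^*.
Proof.
move=> rhoW i j; rewrite entry_channel; apply: eq_bigr => k _.
under eq_bigr => t _ do under eq_bigr => t' _ do rewrite rhoW big_distrr big_distrl /=.
under eq_bigr => t _ do rewrite exchange_big /=.
rewrite exchange_big /=; apply: eq_bigr => m _.
rewrite rmorph_sum big_distrl /=; apply: eq_bigr => t _.
rewrite big_distrr /=; apply: eq_bigr => t' _.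
rewrite rmorphM /=; ring.
Qed.

Lemma gram_channel (T U K : finType) (Kr : K -> Op U T) (rho : Op T T) :
  gram rho -> gram (channel Kr rho).
Proof.
case=> M [W rhoW].
exists (K * M)%type, (fun i p => \sum_t entry (Kr p.1) i t * W t p.2) => i j.
by rewrite (entry_channel_gram Kr rhoW) sum_pair.
Qed.

Lemma trace_channel (T U K : finType) (Kr : K -> Op U T) (rho : Op T T) :
  is_kraus Kr -> trace (channel Kr rho) = trace rho.
Proof.
move=> Kr_kraus; apply: toC_inj; rewrite !toC_trace.
have complete t t' :
    \sum_k \sum_i (entry (Kr k) i t)^* * entry (Kr k) i t' = (t == t')%:R.
  rewrite -entry_idop -Kr_kraus /entry toC_sum; apply: eq_bigr => k _.
  by rewrite -/(entry _ _ _) entry_mul; apply: eq_bigr => i _; rewrite entry_adj.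
transitivity (\sum_t \sum_t' entry rho t t' * (t' == t)%:R); last first.
  by apply: eq_bigr => t _; under eq_bigr => t' _ do rewrite mulrC eq_sym; exact: sum_delta.
under eq_bigr => i _ do rewrite entry_channel.
rewrite exchange_big /=.
under eq_bigr => k _ do rewrite exchange_big /=.
rewrite exchange_big /=.
under eq_bigr => t _ do (under eq_bigr => k _ do rewrite exchange_big /=; rewrite exchange_big /=).
apply: eq_bigr => t _; apply: eq_bigr => t' _; rewrite -complete big_distrr /=.
apply: eq_bigr => k _; rewrite big_distrr /=; apply: eq_bigr => i _; ring.
Qed.

Lemma entry_rho_AFZ d (E F : finType)
    (M : Op ('I_d * E * (F * 'I_d))%type ('I_d * E * (F * 'I_d))%type) p q :
  entry (rho_AFZ M) p q = \sum_e entry M ((p.1, e), p.2) ((q.1, e), q.2).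
Proof. by rewrite /entry /rho_AFZ toC_sum. Qed.

Lemma entry_marg_XC (X G Cs : finType) (M : Op (X * G * Cs)%type (X * G * Cs)%type) u u' :
  entry (marg_XC M) u u' = \sum_g entry M ((u.1, g), u.2) ((u'.1, g), u'.2).
Proof. by rewrite /entry /marg_XC toC_sum. Qed.

Definition adjmx m n (M : 'M[CC]_(m, n)) : 'M[CC]_(n, m) := (map_mx Num.conj M)^T.

Lemma adjmxM m n p (A : 'M[CC]_(m, n)) (B : 'M[CC]_(n, p)) :
  adjmx (A *m B) = adjmx B *m adjmx A.
Proof. by rewrite /adjmx map_mxM trmx_mul. Qed.
Lemma adjmxK m n (A : 'M[CC]_(m, n)) : adjmx (adjmx A) = A.
Proof. by apply/matrixP => i j; rewrite !mxE conjCK. Qed.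
Lemma adjmxB m n (A B : 'M[CC]_(m, n)) : adjmx (A - B) = adjmx A - adjmx B.
Proof. by apply/matrixP => i j; rewrite !mxE rmorphB. Qed.

Lemma mulmx_adj_eq0 m n (M : 'M[CC]_(m, n)) : M *m adjmx M = 0 -> M = 0.
Proof.
move=> MM0; apply/matrixP => i j; rewrite mxE.
have := congr1 (fun X : 'M[CC]_m => X i i) MM0; rewrite !mxE.
under eq_bigr => k _ do rewrite !mxE mulC_conj.
rewrite sum_realC => -[] /eqP; rewrite psumr_eq0; last by move=> k _; exact: sqnorm_ge0.
by move/allP/(_ j (mem_index_enum _))/implyP/(_ isT)/eqP/sqnorm_eq0.
Qed.

Lemma hermitian_ginv n (rho : 'M[CC]_n) : adjmx rho = rho ->
  exists S, [/\ adjmx S = S, rho *m S *m rho = rho & S *m rho *m S = S].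
Proof.
move=> rhoH.
have rGr : rho *m pinvmx rho *m rho = rho by apply: mulmxKpV; exact: submx_refl.
move: (pinvmx rho) rGr => G rGr.
have rG'r : rho *m adjmx G *m rho = rho.
  by have := congr1 (@adjmx _ _) rGr; rewrite !adjmxM rhoH mulmxA.
exists (adjmx G *m rho *m G); split.
- by rewrite !adjmxM adjmxK rhoH mulmxA.
- by rewrite !mulmxA rG'r rGr.
- rewrite !mulmxA -[adjmx G *m rho *m G *m rho]mulmxA.
  rewrite -[adjmx G *m rho *m (G *m rho)]mulmxA [rho *m (G *m rho)]mulmxA rGr.
  by rewrite -!mulmxA [rho *m (adjmx G *m _)]mulmxA [rho *m adjmx G *m _]mulmxA rG'r.
Qed.

(* Uhlmann's theorem: take [Y = A^* S B] and [P = A^* S A] for a generalized inverse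
   [S] of [A A^*]. *)
Lemma uhlmann_mx n m1 m2 (A : 'M[CC]_(n, m1)) (B : 'M[CC]_(n, m2)) :
  A *m adjmx A = B *m adjmx B ->
  exists (Y : 'M[CC]_(m1, m2)) (P : 'M[CC]_m1),
   [/\ A *m Y = B, A *m P = A, Y *m adjmx Y = P, adjmx P = P & P *m P = P].
Proof.
move=> AB; move rhoE: (A *m adjmx A) AB => rho AB.
have rhoH : adjmx rho = rho by rewrite -rhoE adjmxM adjmxK.
have [S [SH rSr SrS]] := hermitian_ginv rhoH.
have rS_id p (X : 'M[CC]_(n, p)) : X *m adjmx X = rho -> rho *m S *m X = X.
  move=> XX; apply/eqP; rewrite -subr_eq0; apply/eqP/mulmx_adj_eq0.
  rewrite adjmxB !adjmxM SH rhoH mulmxBl !mulmxBr !mulmxA.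
  have E2 : rho *m S *m X *m adjmx X = rho by rewrite -mulmxA XX rSr.
  have E1 : rho *m S *m X *m adjmx X *m S *m rho = rho by rewrite E2 rSr.
  have E3 : X *m adjmx X *m S *m rho = rho by rewrite XX rSr.
  by rewrite E1 E2 E3 XX !subrr.
exists (adjmx A *m S *m B), (adjmx A *m S *m A); split.
- by rewrite !mulmxA rhoE rS_id // -AB.
- by rewrite !mulmxA rhoE rS_id.
- rewrite !adjmxM adjmxK SH !mulmxA -[_ *m B *m adjmx B]mulmxA -AB.
  by rewrite -[_ *m S *m rho]mulmxA -[_ *m (S *m rho) *m S]mulmxA SrS.
- by rewrite !adjmxM adjmxK SH mulmxA.
- rewrite !mulmxA -[_ *m A *m adjmx A]mulmxA rhoE.
  by rewrite -[_ *m S *m rho]mulmxA -[_ *m (S *m rho) *m S]mulmxA SrS.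
Qed.

Definition mxof (X Y : finType) (f : X -> Y -> CC) : 'M[CC]_(#|X|, #|Y|) :=
  \matrix_(i, j) f (enum_val i) (enum_val j).
Definition ofmx (X Y : finType) (M : 'M[CC]_(#|X|, #|Y|)) : X -> Y -> CC :=
  fun x y => M (enum_rank x) (enum_rank y).

Lemma ofmxK (X Y : finType) : cancel (@ofmx X Y) (@mxof X Y).
Proof. by move=> M; apply/matrixP => i j; rewrite mxE /ofmx !enum_valK. Qed.
Lemma mxofE (X Y : finType) (f : X -> Y -> CC) x y :
  mxof f (enum_rank x) (enum_rank y) = f x y.
Proof. by rewrite mxE !enum_rankK. Qed.
Lemma mxof_eq (X Y : finType) (f g : X -> Y -> CC) :
  mxof f = mxof g -> forall x y, f x y = g x y.
Proof. by move=> fg x y; rewrite -(mxofE f) -(mxofE g) fg. Qed.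
Lemma mxof_adj (X Y : finType) (f : X -> Y -> CC) :
  adjmx (mxof f) = mxof (fun y x => (f x y)^*).
Proof. by apply/matrixP => i j; rewrite !mxE. Qed.
Lemma mxof_mul (X Y Z : finType) (f : X -> Y -> CC) (g : Y -> Z -> CC) :
  mxof f *m mxof g = mxof (fun x z => \sum_y f x y * g y z).
Proof.
apply/matrixP => i k; rewrite !mxE (big_enum_val (A := Y)) /=.
by apply: eq_bigr => j _; rewrite !mxE.
Qed.

Lemma uhlmann (T K1 K2 : finType) (A : T -> K1 -> CC) (B : T -> K2 -> CC) :
  (forall r r', \sum_k A r k * (A r' k)^* = \sum_k B r k * (B r' k)^*) ->
  exists (Y : K1 -> K2 -> CC) (Pi : K1 -> K1 -> CC),
  [/\ forall r c, \sum_k A r k * Y k c = B r c,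
      forall r k, \sum_k' A r k' * Pi k' k = A r k,
      forall k1 k2, \sum_c Y k1 c * (Y k2 c)^* = Pi k1 k2,
      forall k1 k2, (Pi k1 k2)^* = Pi k2 k1 &
      forall k1 k2, \sum_k Pi k1 k * Pi k k2 = Pi k1 k2].
Proof.
move=> AB.
have /uhlmann_mx[Ym [Pm]] : mxof A *m adjmx (mxof A) = mxof B *m adjmx (mxof B).
  by rewrite !mxof_adj !mxof_mul; apply/matrixP => i j; rewrite !mxE AB.
rewrite -[Ym]ofmxK -[Pm]ofmxK !mxof_adj !mxof_mul.
move=> [/mxof_eq AY /mxof_eq AP /mxof_eq YY /mxof_eq PH /mxof_eq PP].
by exists (ofmx Ym), (ofmx Pm); split.
Qed.

Definition expiC (t : R) : CC := toC (Cexpi t).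

Lemma expiCD s t : expiC s * expiC t = expiC (Rplus s t).
Proof.
apply/eqP; rewrite eq_complex /=; apply/andP; split; apply/eqP.
  by rewrite cos_plus.
by rewrite sin_plus addrC.
Qed.
Lemma expiC_conj t : (expiC t)^* = expiC (Ropp t).
Proof. by apply/eqP; rewrite eq_complex /= cos_neg sin_neg !eqxx. Qed.
Lemma expiC0 : expiC 0%:R = 1.
Proof. by apply/eqP; rewrite eq_complex /= cos_0 sin_0 !eqxx. Qed.
Lemma expiCX t n : expiC t ^+ n = expiC (Rmult (INR n) t).
Proof.
elim: n => [|n IH]; first by rewrite expr0 Rmult_0_l expiC0.
by rewrite exprS IH expiCD S_INR Rmult_plus_distr_r Rmult_1_l Rplus_comm.
Qed.
Lemma expiC_conjK t : (expiC t)^* * expiC t = 1.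
Proof. by rewrite expiC_conj expiCD Rplus_opp_l expiC0. Qed.

Lemma expiC_dft_phaseX d (u v : 'I_d) :
  expiC (dft_phase d u v) ^+ d = 1.
Proof.
have [cos1 sin0] := cos_sin_dft_period u v (INR_dim_gt0 u).
by rewrite expiCX; apply/eqP; rewrite eq_complex /= cos1 sin0 !eqxx.
Qed.

Lemma expiC_dft_phase_neq1 d (u v : 'I_d) : u != v -> expiC (dft_phase d u v) != 1.
Proof.
move=> uv; apply/eqP => /(congr1 (@complex.Re R)) /= /sin_half_eq0.
exact: sin_dft_phase_neq0.
Qed.

(* Orthogonality of the characters of [Z_d]: a geometric sum of a [d]-th root of unity. *)
Lemma sum_expiC_dft d (u v : 'I_d) :
  \sum_(x < d) expiC (Rmult (INR x) (dft_phase d u v)) = (u == v)%:R * (INR d)%:C.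
Proof.
have [<-|uv] := eqVneq u v.
  rewrite mul1r /dft_phase Rminus_diag Rmult_0_r /Rdiv Rmult_0_l.
  under eq_bigr => x _ do rewrite Rmult_0_r expiC0.
  by rewrite sumr_const card_ord INRE rmorph_nat.
rewrite mul0r; under eq_bigr => x _ do rewrite -expiCX.
have := subrX1 (expiC (dft_phase d u v)) d.
rewrite expiC_dft_phaseX subrr => /esym/eqP.
by rewrite mulf_eq0 subr_eq0 (negbTE (expiC_dft_phase_neq1 uv)) => /eqP.
Qed.

Definition cbasis d (x a : 'I_d) : CC := toC (conj_basis x a).

Lemma cbasis_complete d (a a' : 'I_d) : \sum_x cbasis x a * (cbasis x a')^* = (a == a')%:R.
Proof.
have d0 := INR_dim_gt0 a.
under eq_bigr => x _ do rewrite /cbasis /conj_basis !toC_mul !toC_RC rmorphM /= conj_realC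
  mulrACA mul_realC -!/(expiC _) expiC_conj expiCD dft_phaseE //.
by rewrite -big_distrr /= sum_expiC_dft mulrCA mul_realC dft_norm // mulr1.
Qed.

Lemma cbasis_orthonormal d (x x' : 'I_d) :
  \sum_a (cbasis x a)^* * cbasis x' a = (x == x')%:R.
Proof.
have d0 := INR_dim_gt0 x.
under eq_bigr => a _ do rewrite /cbasis /conj_basis !toC_mul !toC_RC rmorphM /= conj_realC
  mulrACA mul_realC -!/(expiC _) expiC_conj expiCD dft_phaseE' //.
by rewrite -big_distrr /= sum_expiC_dft mulrCA mul_realC dft_norm // mulr1 eq_sym.
Qed.

Lemma cbasis_sqnorm d (x a : 'I_d) : (cbasis x a)^* * cbasis x a * (INR d)%:C = 1.
Proof.
rewrite /cbasis /conj_basis !toC_mul !toC_RC rmorphM /= conj_realC mulrACA mul_realC.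
by rewrite -/(expiC _) expiC_conjK mulr1 mul_realC (dft_norm (INR_dim_gt0 x)).
Qed.

Lemma entry_cq_state d (G : finType) (M : Op ('I_d * G)%type ('I_d * G)%type) p q :
  entry (cq_state M) p q = (p.1 == q.1)%:R *
    \sum_a \sum_a' (cbasis p.1 a)^* * entry M (a, p.2) (a', q.2) * cbasis p.1 a'.
Proof.
rewrite /entry /cq_state; case: eqP => _; last by rewrite mul0r.
rewrite mul1r toC_sum; apply: eq_bigr => a _; rewrite toC_sum; apply: eq_bigr => a' _.
by rewrite !toC_mul toC_conj.
Qed.

Section PartialIsometryCompletion.
Variables (K Cs : finType) (Y : K -> Cs -> CC) (Pi : K -> K -> CC) (c0 : Cs).

Definition coPi (k1 k2 : K) : CC := (k1 == k2)%:R - Pi k1 k2.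

(* [None] applies the partial isometry [Y^T]; [Some k] sends the complement of its
   initial space to the fixed output [c0]. *)
Definition krausC (k : option K) (c : Cs) (k' : K) : CC :=
  match k with None => Y k' c | Some k => (c == c0)%:R * coPi k' k end.

Lemma krausC_Some_eq0 (T : finType) (A : T -> K -> CC) :
  (forall r k, \sum_k' A r k' * Pi k' k = A r k) ->
  forall k r c, \sum_k' A r k' * krausC (Some k) c k' = 0.
Proof.
move=> APi k r c; rewrite /krausC /coPi.
under eq_bigr => k' _ do rewrite mulrCA mulrBr.
rewrite -big_distrr /= sumrB APi.
under eq_bigr => k' _ do rewrite mulrC eq_sym.
by rewrite sum_delta subrr mulr0.
Qed.

Hypothesis YY_Pi : forall k1 k2, \sum_c Y k1 c * (Y k2 c)^* = Pi k1 k2.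
Hypothesis Pi_adj : forall k1 k2, (Pi k1 k2)^* = Pi k2 k1.
Hypothesis Pi_idem : forall k1 k2, \sum_k Pi k1 k * Pi k k2 = Pi k1 k2.

Lemma coPi_idem k1 k2 : \sum_k coPi k1 k * coPi k k2 = coPi k1 k2.
Proof.
rewrite /coPi.
under eq_bigr => k _ do rewrite mulrBl !mulrBr.
rewrite !sumrB (sum_delta k1 (fun k => (k == k2)%:R)) (sum_delta k1 (fun k => Pi k k2)).
under eq_bigr => k _ do rewrite mulrC eq_sym.
by rewrite (sum_delta k2 (fun k => Pi k1 k)) Pi_idem subrr subr0.
Qed.

Lemma coPi_adj k1 k2 : (coPi k1 k2)^* = coPi k2 k1.
Proof. by rewrite /coPi rmorphB /= conj_nat Pi_adj eq_sym. Qed.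

Lemma krausC_complete k1 k2 :
  \sum_k \sum_c (krausC k c k1)^* * krausC k c k2 = (k1 == k2)%:R.
Proof.
rewrite sum_option /=.
have -> : \sum_c (Y k1 c)^* * Y k2 c = Pi k2 k1.
  by rewrite -YY_Pi; apply: eq_bigr => c _; rewrite mulrC.
under eq_bigr => k _ do under eq_bigr => c _ do
  rewrite rmorphM /= conj_nat mulrACA -natrM mulnb andbb eq_sym.
under eq_bigr => k _ do rewrite sum_delta coPi_adj mulrC.
by rewrite coPi_idem /coPi addrC subrK eq_sym.
Qed.

End PartialIsometryCompletion.

Section ConjugateMeasurement.
Variables (d : nat) (E Cs K : finType) (Kc : K -> Cs -> ('I_d * E)%type -> CC).
Hypothesis Kc_complete :
  forall p1 p2, \sum_k \sum_c (Kc k c p1)^* * Kc k c p2 = (p1 == p2)%:R.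

(* Measure [A] in the conjugate basis, keep the outcome [x] and apply the channel
   with Kraus operators [Kc] to [(x, E)]. *)
Definition measure_then (k : K) : Op ('I_d * Cs)%type ('I_d * E)%type :=
  fun u p => ofC (Kc k u.2 (u.1, p.2) * (cbasis u.1 p.1)^*).

Lemma entry_measure_then k u p :
  entry (measure_then k) u p = Kc k u.2 (u.1, p.2) * (cbasis u.1 p.1)^*.
Proof. by rewrite /entry /measure_then toCK. Qed.

Lemma measure_then_kraus : is_kraus measure_then.
Proof.
apply: entry_ext => -[a e] -[a' e'].
rewrite entry_idop /entry /= toC_sum.
under eq_bigr => k _ do rewrite -/(entry _ _ _) entry_mul.
under eq_bigr => k _ do under eq_bigr => u _ do
  rewrite entry_adj !entry_measure_then rmorphM /= conjCK mulrACA.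
rewrite exchange_big sum_pair /=.
under eq_bigr => x _ do rewrite exchange_big /=.
under eq_bigr => x _ do under eq_bigr => k _ do rewrite -big_distrl /=.
under eq_bigr => x _ do rewrite -big_distrl /= Kc_complete xpair_eqE eqxx /=.
by rewrite -big_distrr /= cbasis_complete -natrM mulnb xpair_eqE andbC.
Qed.

End ConjugateMeasurement.

Section EntropicUncertainty.
Variables (d : nat) (E F : finType) (P : 'I_d -> R) (sig : 'I_d -> (E * F)%type -> cplx).
Variables (Cs : finType) (phi : ('I_d * (F * 'I_d) * Cs)%type -> cplx).

Local Notation I := ('I_d).
Local Notation G := (F * 'I_d)%type.

Definition psi (p : (I * E * G)%type) : CC := toC (psi_vec P sig p).

Lemma psiE a e f z :
  psi ((a, e), (f, z)) = (a == z)%:R * ((sqrt (P z))%:C * toC (sig z (e, f))).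
Proof. by rewrite /psi /psi_vec; case: eqP => _; rewrite ?mul1r ?mul0r ?toC_mul. Qed.

Lemma psi_offdiag a e (g : G) : a != g.2 -> psi ((a, e), g) = 0.
Proof. by case: g => f z /= /negbTE az; rewrite /psi /psi_vec az. Qed.

(* Amplitudes of [(<x~|_A (x) I) psi]. *)
Definition xamp (x : I) (g : G) (e : E) : CC := \sum_a (cbasis x a)^* * psi ((a, e), g).

Lemma xampE x g e : xamp x g e = (cbasis x g.2)^* * psi ((g.2, e), g).
Proof.
rewrite /xamp (bigD1 g.2) //= big1 ?addr0 // => a a_neq.
by rewrite psi_offdiag ?mulr0.
Qed.

(* The natural purification of the CQ state, with purifying system [(X, E)]. *)
Definition cq_purif (r : (I * G)%type) (c : (I * E)%type) : CC :=
  (r.1 == c.1)%:R * xamp r.1 r.2 c.2.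
Definition phi_amp (r : (I * G)%type) (c : Cs) : CC := toC (phi (r, c)).

Lemma cq_purif_gram r r' :
  \sum_c cq_purif r c * (cq_purif r' c)^*
  = entry (cq_state (rho_AFZ (proj (psi_vec P sig)))) r r'.
Proof.
rewrite entry_cq_state sum_pair.
case: r => x g; case: r' => x' g' /=.
under eq_bigr => x0 _ do under eq_bigr => e _ do
  rewrite /cq_purif /= rmorphM /= conj_nat mulrACA.
under eq_bigr => x0 _ do rewrite -big_distrr /=.
have [<-|xx'] := eqVneq x x'; last first.
  rewrite mul0r big1 // => x0 _.
  have [<-|] := eqVneq x x0; last by rewrite !mul0r.
  by rewrite eq_sym (negbTE xx') mulr0 mul0r.
under eq_bigr => x0 _ do rewrite -natrM mulnb andbb.
rewrite sum_delta mul1r.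
under [RHS]eq_bigr => a _ do under eq_bigr => a' _ do
  rewrite entry_rho_AFZ /= big_distrr big_distrl /=.
under [RHS]eq_bigr => a _ do rewrite exchange_big /=.
rewrite [RHS]exchange_big /=; apply: eq_bigr => e _.
rewrite /xamp big_distrl /=; apply: eq_bigr => a _.
rewrite rmorph_sum big_distrr /=; apply: eq_bigr => a' _.
rewrite entry_proj -!/(psi _) rmorphM /= conjCK; ring.
Qed.

Lemma cq_purif_sqnorm x g :
  \sum_c cq_purif (x, g) c * (cq_purif (x, g) c)^* = \sum_e xamp x g e * (xamp x g e)^*.
Proof.
rewrite sum_pair -(sum_delta x (fun x0 => \sum_e xamp x g e * (xamp x g e)^*)).
apply: eq_bigr => x0 _; rewrite big_distrr /=; apply: eq_bigr => e _.
by rewrite /cq_purif /= rmorphM /= conj_nat [in RHS]natb_sqr; ring.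
Qed.

Definition psiAE := ptrace2 (proj (psi_vec P sig)).
Definition phiXC := marg_XC (proj phi).
Definition I_psiE := kron (@idop I) (ptrace1 psiAE).
Definition I_phiC := kron (@idop I) (ptrace1 phiXC).

Lemma entry_psiAE p q : entry psiAE p q = \sum_g psi (p, g) * (psi (q, g))^*.
Proof. by rewrite entry_ptrace2; apply: eq_bigr => g _; rewrite entry_proj. Qed.

Lemma entry_phiXC u u' :
  entry phiXC u u' = \sum_g phi_amp (u.1, g) u.2 * (phi_amp (u'.1, g) u'.2)^*.
Proof. by rewrite entry_marg_XC; apply: eq_bigr => g _; rewrite entry_proj. Qed.

Definition I_psiE_vec (p : (I * E)%type) (m : (I * (I * G))%type) : CC :=
  (p.1 == m.1)%:R * psi ((m.2.1, p.2), m.2.2).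

Lemma I_psiE_gram p q : entry I_psiE p q = \sum_m I_psiE_vec p m * (I_psiE_vec q m)^*.
Proof.
rewrite entry_kron entry_idop entry_ptrace1 sum_pair.
under [RHS]eq_bigr => a1 _ do under eq_bigr => m _ do
  rewrite /I_psiE_vec /= rmorphM /= conj_nat mulrACA -mulrA.
under [RHS]eq_bigr => a1 _ do rewrite -big_distrr /=.
rewrite sum_delta [RHS]sum_pair eq_sym.
under [RHS]eq_bigr => i _ do rewrite -big_distrr.
rewrite -big_distrr /=; congr (_ * _).
by apply: eq_bigr => a _; rewrite entry_psiAE.
Qed.

Lemma entry_I_phiC u u' : entry I_phiC u u' =
  (u.1 == u'.1)%:R * \sum_x0 \sum_g phi_amp (x0, g) u.2 * (phi_amp (x0, g) u'.2)^*.
Proof.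
rewrite entry_kron entry_idop entry_ptrace1; congr (_ * _).
by apply: eq_bigr => x0 _; rewrite entry_phiXC.
Qed.

Definition I_phiC_vec (u : (I * Cs)%type) (m : (I * (I * G))%type) : CC :=
  (u.1 == m.1)%:R * phi_amp (m.2.1, m.2.2) u.2.

Lemma I_phiC_gram u u' : entry I_phiC u u' = \sum_m I_phiC_vec u m * (I_phiC_vec u' m)^*.
Proof.
rewrite entry_I_phiC sum_pair.
under [RHS]eq_bigr => a1 _ do under eq_bigr => m _ do
  rewrite /I_phiC_vec /= rmorphM /= conj_nat mulrACA -mulrA.
under [RHS]eq_bigr => a1 _ do rewrite -big_distrr /=.
rewrite sum_delta [RHS]sum_pair eq_sym.
under [RHS]eq_bigr => i _ do rewrite -big_distrr.
by rewrite -big_distrr /=.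
Qed.

Lemma psd_I_psiE : psd I_psiE.
Proof. by apply: gram_psd; exists _, I_psiE_vec; exact: I_psiE_gram. Qed.
Lemma psd_I_phiC : psd I_phiC.
Proof. by apply: gram_psd; exists _, I_phiC_vec; exact: I_phiC_gram. Qed.

Section Normalization.
Hypothesis P_ge0 : forall z, Rle 0 (P z).
Hypothesis P_sum1 : \sum_(z < d) P z = 1.
Hypothesis sig_unit : forall z, \sum_(k : (E * F)%type) Cnorm2 (sig z k) = 1.

Lemma ord_inhabited : inhabited I.
Proof.
case: (pickP (fun _ : I => true)) => [z _|I0]; first by constructor.
move: P_sum1; rewrite big1 => [/esym/eqP|z]; last by have := I0 z.
by rewrite oner_eq0.
Qed.

Lemma sig_sqnorm z : \sum_e \sum_f toC (sig z (e, f)) * (toC (sig z (e, f)))^* = 1.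
Proof.
rewrite -(sum_pair (fun k => toC (sig z k) * (toC (sig z k))^*)).
rewrite (eq_bigr (fun k => Cnorm2 (sig z k) +i* 0)); first by rewrite sum_realC sig_unit.
by move=> k _; rewrite mulC_conj; case: (sig z k).
Qed.

Lemma trace_psiAE : trace psiAE = Defs.C1.
Proof.
apply: toC_inj; rewrite toC_trace toC_C1.
under eq_bigr => p _ do rewrite entry_psiAE.
rewrite exchange_big sum_pair /=.
transitivity (\sum_f \sum_z (P z)%:C * \sum_e toC (sig z (e, f)) * (toC (sig z (e, f)))^*).
  apply: eq_bigr => f _; apply: eq_bigr => z _; rewrite sum_pair.
  rewrite -(sum_delta z (fun _ =>
    (P z)%:C * \sum_e toC (sig z (e, f)) * (toC (sig z (e, f)))^*)).
  apply: eq_bigr => a _; rewrite !big_distrr /=; apply: eq_bigr => e _.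
  have sqrtP : (sqrt (P z))%:C * (sqrt (P z))%:C = (P z)%:C :> CC.
    by rewrite mul_realC sqrt_sqrt; last exact: P_ge0.
  rewrite psiE !rmorphM /= conj_nat conj_realC eq_sym -sqrtP [in RHS]natb_sqr; ring.
rewrite exchange_big /=.
under eq_bigr => z _ do rewrite -big_distrr /= exchange_big sig_sqnorm mulr1.
by rewrite sum_realC P_sum1.
Qed.

Lemma density_psiAE : density psiAE.
Proof.
split; last exact: trace_psiAE.
by apply: gram_psd; exists _, (fun p g => psi (p, g)); exact: entry_psiAE.
Qed.

Lemma sum_xamp_sqnorm : \sum_x \sum_g \sum_e xamp x g e * (xamp x g e)^* = 1.
Proof.
rewrite -toC_C1 -trace_psiAE toC_trace sum_pair.
under [RHS]eq_bigr => a _ do under eq_bigr => e _ do rewrite entry_psiAE.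
under [RHS]eq_bigr => a _ do rewrite exchange_big /=.
rewrite [RHS]exchange_big /= exchange_big /=; apply eq_bigr => g _.
rewrite [LHS]exchange_big [RHS]exchange_big /=; apply: eq_bigr => e _.
rewrite [RHS](bigD1 g.2) //= [X in _ = _ + X]big1 ?addr0; last first.
  by move=> a a_neq; rewrite psi_offdiag // mul0r.
transitivity (\sum_x (cbasis x g.2 * (cbasis x g.2)^*) *
                     (psi ((g.2, e), g) * (psi ((g.2, e), g))^*)).
  by apply: eq_bigr => x _; rewrite xampE rmorphM /= conjCK; ring.
by rewrite -big_distrl /= cbasis_complete eqxx mul1r.
Qed.

Hypothesis phi_purifies : ptrace2 (proj phi) = cq_state (rho_AFZ (proj (psi_vec P sig))).

Lemma purif_gram_eq r r' :
  \sum_c cq_purif r c * (cq_purif r' c)^* = \sum_c phi_amp r c * (phi_amp r' c)^*.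
Proof.
rewrite cq_purif_gram -phi_purifies entry_ptrace2.
by apply: eq_bigr => c _; rewrite entry_proj.
Qed.

Lemma env_inhabited : inhabited Cs.
Proof.
case: (pickP (fun _ : Cs => true)) => [c _|Cs0]; first by constructor.
suff : (1 : CC) = 0 by move/eqP; rewrite oner_eq0.
rewrite -sum_xamp_sqnorm; apply: big1 => x _; apply: big1 => g _.
by rewrite -cq_purif_sqnorm purif_gram_eq big1 // => c; rewrite Cs0.
Qed.

Section Channel.
Variables (Y : (I * E)%type -> Cs -> CC) (Pi : (I * E)%type -> (I * E)%type -> CC) (c0 : Cs).
Hypothesis purif_Y : forall r c, \sum_k cq_purif r k * Y k c = phi_amp r c.
Hypothesis purif_Pi : forall r k, \sum_k' cq_purif r k' * Pi k' k = cq_purif r k.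
Hypothesis YY_Pi : forall k1 k2, \sum_c Y k1 c * (Y k2 c)^* = Pi k1 k2.
Hypothesis Pi_adj : forall k1 k2, (Pi k1 k2)^* = Pi k2 k1.
Hypothesis Pi_idem : forall k1 k2, \sum_k Pi k1 k * Pi k k2 = Pi k1 k2.

Local Notation Kc := (krausC Y Pi c0).
Definition measL := measure_then Kc.

Lemma measL_kraus : is_kraus measL.
Proof. exact/measure_then_kraus/krausC_complete. Qed.

Definition kamp k c x a g := \sum_e Kc k c (x, e) * psi ((a, e), g).

Lemma kamp_offdiag k c x a (g : G) : a != g.2 -> kamp k c x a g = 0.
Proof. by move=> a_neq; rewrite /kamp big1 // => e _; rewrite psi_offdiag // mulr0. Qed.

Lemma purif_krausC k x g c :
  \sum_c' cq_purif (x, g) c' * Kc k c c' = (cbasis x g.2)^* * kamp k c x g.2 g.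
Proof.
rewrite sum_pair /=.
under eq_bigr => x0 _ do under eq_bigr => e _ do rewrite /cq_purif /= -mulrA.
under eq_bigr => x0 _ do rewrite -big_distrr /=.
rewrite sum_delta /kamp big_distrr /=; apply: eq_bigr => e _.
by rewrite xampE; ring.
Qed.

Lemma measL_psi k u g :
  \sum_t entry (measL k) u t * psi (t, g) = \sum_c' cq_purif (u.1, g) c' * Kc k u.2 c'.
Proof.
rewrite sum_pair [RHS]sum_pair /=.
under eq_bigr => a _ do under eq_bigr => e _ do rewrite entry_measure_then /=.
rewrite exchange_big /=.
under [RHS]eq_bigr => x0 _ do under eq_bigr => e _ do rewrite /cq_purif /= -mulrA.
under [RHS]eq_bigr => x0 _ do rewrite -big_distrr /=.
rewrite sum_delta; apply: eq_bigr => e _.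
rewrite /xamp big_distrl /=; apply: eq_bigr => a _; ring.
Qed.

Lemma channel_measL_psiAE : channel measL psiAE = phiXC.
Proof.
apply: entry_ext => u u'.
rewrite (entry_channel_gram measL entry_psiAE) sum_option /=.
under eq_bigr => g _ do rewrite !measL_psi !purif_Y.
rewrite [X in _ + X]big1 ?addr0; first by rewrite entry_phiXC.
move=> k _; apply: big1 => g _.
by rewrite !measL_psi (krausC_Some_eq0 Y c0 purif_Pi) mul0r.
Qed.

Lemma density_phiXC : density phiXC.
Proof.
split.
  by apply: gram_psd; exists _, (fun u g => phi_amp (u.1, g) u.2); exact: entry_phiXC.
by rewrite -channel_measL_psiAE trace_channel; [exact: trace_psiAE | exact: measL_kraus].
Qed.

Lemma psd_channel_I_psiE : psd (channel measL I_psiE).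
Proof. by apply/gram_psd/gram_channel; exists _, I_psiE_vec; exact: I_psiE_gram. Qed.

Lemma measL_I_psiE_vec k u a1 a0 g :
  \sum_t entry (measL k) u t * I_psiE_vec t (a1, (a0, g))
  = (cbasis u.1 a1)^* * kamp k u.2 u.1 a0 g.
Proof.
rewrite sum_pair /= -(sum_delta a1 (fun a => (cbasis u.1 a)^* * kamp k u.2 u.1 a0 g)).
apply: eq_bigr => a _; rewrite /kamp big_distrr big_distrr /=; apply: eq_bigr => e _.
by rewrite entry_measure_then /I_psiE_vec /= eq_sym; ring.
Qed.

Definition kgram c c' x := \sum_k \sum_a \sum_g kamp k c x a g * (kamp k c' x a g)^*.

Lemma entry_channel_measL_I_psiE x c x' c' :
  entry (channel measL I_psiE) (x, c) (x', c') = (x == x')%:R * kgram c c' x.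
Proof.
rewrite (entry_channel_gram measL I_psiE_gram).
transitivity (\sum_k \sum_a0 \sum_g (\sum_a1 (cbasis x a1)^* * cbasis x' a1) *
                (kamp k c x a0 g * (kamp k c' x' a0 g)^*)).
  apply: eq_bigr => k _; rewrite sum_pair.
  under eq_bigr => a1 _ do rewrite sum_pair.
  rewrite exchange_big; apply: eq_bigr => a0 _; rewrite exchange_big; apply: eq_bigr => g _.
  rewrite big_distrl; apply: eq_bigr => a1 _; rewrite !measL_I_psiE_vec rmorphM /= conjCK /=; ring.
under eq_bigr => k _ do under eq_bigr => a0 _ do under eq_bigr => g _ do
  rewrite cbasis_orthonormal.
have [<-|xx'] := eqVneq x x'.
  rewrite mul1r; apply: eq_bigr => k _; apply: eq_bigr => a0 _; apply: eq_bigr => g _.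
  by rewrite mul1r.
by rewrite mul0r big1 // => k _; rewrite big1 // => a0 _; rewrite big1 // => g _; rewrite mul0r.
Qed.

(* [Kc (Some k)] kills the support of the purification, and each entry of the
   conjugate basis has modulus [1 / sqrt d]. *)
Lemma kamp_Some_diag k c x (g : G) : kamp (Some k) c x g.2 g = 0.
Proof.
have := krausC_Some_eq0 Y c0 purif_Pi k (x, g) c; rewrite purif_krausC => kamp0.
transitivity (cbasis x g.2 * (INR d)%:C * ((cbasis x g.2)^* * kamp (Some k) c x g.2 g)).
  by rewrite -[LHS]mul1r -(cbasis_sqnorm x g.2); ring.
by rewrite kamp0 mulr0.
Qed.

Lemma phi_amp_kamp x g c c' : (INR d)%:C * (phi_amp (x, g) c * (phi_amp (x, g) c')^*)
  = \sum_k \sum_a kamp k c x a g * (kamp k c' x a g)^*.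
Proof.
have diag k b b' : \sum_a kamp k b x a g * (kamp k b' x a g)^*
                   = kamp k b x g.2 g * (kamp k b' x g.2 g)^*.
  rewrite (bigD1 g.2) //= big1 ?addr0 // => a a_neq.
  by rewrite kamp_offdiag // mul0r.
rewrite (eq_bigr _ (fun k _ => diag k c c')) sum_option big1 ?addr0; last first.
  by move=> k _; rewrite kamp_Some_diag mul0r.
have phi_kamp b : phi_amp (x, g) b = (cbasis x g.2)^* * kamp None b x g.2 g.
  by rewrite -purif_Y -purif_krausC.
rewrite !phi_kamp rmorphM /= conjCK.
transitivity ((cbasis x g.2)^* * cbasis x g.2 * (INR d)%:C *
              (kamp None c x g.2 g * (kamp None c' x g.2 g)^*)); first by ring.
by rewrite cbasis_sqnorm mul1r.
Qed.

Lemma scaled_I_phiC_kgram c c' :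
  (INR d)%:C * (\sum_x \sum_g phi_amp (x, g) c * (phi_amp (x, g) c')^*)
  = \sum_x kgram c c' x.
Proof.
rewrite big_distrr; apply: eq_bigr => x _; rewrite big_distrr /kgram /=.
under eq_bigr => g _ do rewrite phi_amp_kamp.
by rewrite exchange_big; apply: eq_bigr => k _; rewrite exchange_big.
Qed.

(* [d (I (x) phi_C) - L(I (x) psi_E)] only retains the terms with [x' <> x] of the
   sum defining [kgram], so it is the Gram matrix of the following vectors. *)
Definition gap_vec (u : (I * Cs)%type) (m : (I * (I * (option (I * E) * (I * G))))%type) : CC :=
  (u.1 == m.1)%:R * (m.2.1 != m.1)%:R * kamp m.2.2.1 u.2 m.2.1 m.2.2.2.1 m.2.2.2.2.

Lemma gap_vec_gram x c x' c' : \sum_m gap_vec (x, c) m * (gap_vec (x', c') m)^*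
   = (x' == x)%:R * \sum_x0 (x0 != x)%:R * kgram c c' x0.
Proof.
rewrite [LHS]sum_pair -(sum_delta x (fun x1 =>
  (x' == x1)%:R * \sum_x0 (x0 != x1)%:R * kgram c c' x0)).
apply: eq_bigr => x1 _.
rewrite [LHS]sum_pair mulrA big_distrr /=; apply: eq_bigr => x0 _.
rewrite [LHS]sum_pair /kgram mulrA big_distrr /=; apply: eq_bigr => k _.
rewrite [LHS]sum_pair big_distrr /=; apply: eq_bigr => a _.
rewrite big_distrr /=; apply: eq_bigr => g _.
rewrite /gap_vec /= !rmorphM /= !conj_nat [in RHS](natb_sqr (x0 != x1)); ring.
Qed.

Lemma channel_I_psiE_le_I_phiC : loewner_le (channel measL I_psiE) (scale (INR d) I_phiC).
Proof.
apply: gram_psd; exists _, gap_vec => -[x c] [x' c'].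
rewrite gap_vec_gram entry_subop entry_scale entry_I_phiC entry_channel_measL_I_psiE /=.
have off_x : \sum_x0 (x0 != x)%:R * kgram c c' x0 = \sum_x0 kgram c c' x0 - kgram c c' x.
  rewrite [in RHS](bigD1 x) //= [in LHS](bigD1 x) //= eqxx mul0r add0r addrAC subrr add0r.
  by apply: eq_bigr => i ->; rewrite mul1r.
by rewrite mulrCA scaled_I_phiC_kgram off_x mulrBr eq_sym.
Qed.

End Channel.
End Normalization.
End EntropicUncertainty.

(* MathComp rebinds [%R] to [ring_scope]; the statement below means the Stdlib reals. *)
Local Close Scope ring_scope.
Local Close Scope complex_scope.
Delimit Scope R_scope with R.

Lemma divergence_channel_bound (D : divergence_family) (T U K : finType)
    (L : K -> Op U T) (rho sigma : Op T T) (rho' sigma' : Op U U) (c : R) :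
  is_divergence D -> is_kraus L -> (0 < c)%R ->
  density rho -> psd sigma -> density rho' -> psd sigma' -> psd (channel L sigma) ->
  channel L rho = rho' -> loewner_le (channel L sigma) (scale c sigma') ->
  Rbar_le (D U rho' sigma') (Rbar_shift (D T rho sigma) (ln c)).
Proof.
move=> [dpi [dscale [ddom _]]] L_kraus c_gt0 rho1 sigma0 rho'1 sigma'0 Lsigma0 Lrho Lsigma.
have := dpi _ _ _ L L_kraus rho sigma rho1 sigma0; rewrite Lrho.
have := ddom _ rho' _ _ rho'1 Lsigma0 Lsigma; rewrite dscale //.
case: (D U rho' sigma') => [a|]; case: (D U rho' (channel L sigma)) => [m|];
  case: (D T rho sigma) => [b|] //=; lra.
Qed.

Theorem lemma3 (D : divergence_family) (HD : is_divergence D)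
  (d : nat) (E F : finType) (P : 'I_d -> R) (sig : 'I_d -> prod E F -> cplx)
  (HP0 : forall z, (0 <= P z)%R)
  (HP1 : \big[Rplus/0%R]_(z < d) P z = 1%R)
  (Hsig : forall z, \big[Rplus/0%R]_(k : prod E F) Cnorm2 (sig z k) = 1%R)
  (Cs : finType) (phi : prod (prod 'I_d (prod F 'I_d)) Cs -> cplx)
  (Hphi : ptrace2 (proj phi) = cq_state (rho_AFZ (proj (psi_vec P sig)))) :
  (* H_down(A|E)_psi + H^perp_down(X_A|FZ)_psi <= log |A|, i.e.
     -D(psi_AE, I (x) psi_E) + D(phi_XC, I (x) phi_C) <= log d *)
  Rbar_le (Dcond D (marg_XC (proj phi)))
          (Rbar_shift (Dcond D (ptrace2 (proj (psi_vec P sig)))) (ln (INR d))).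
Proof.
have [x0] := ord_inhabited HP1.
have [c0] := env_inhabited HP0 HP1 Hsig Hphi.
have [Y [Pi [purif_Y purif_Pi YY_Pi Pi_adj Pi_idem]]] := uhlmann (purif_gram_eq Hphi).
apply: (divergence_channel_bound (L := measL Y Pi c0) HD).
- exact: measL_kraus.
- exact: INR_dim_gt0 x0.
- exact: density_psiAE.
- exact: psd_I_psiE.
- exact: density_phiXC.
- exact: psd_I_phiC.
- exact: psd_channel_I_psiE.
- exact: channel_measL_psiAE.
- exact: channel_I_psiE_le_I_phiC.
Qed.
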